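(* Let $C\in\mathbb R^3$ be a unit vector and $\Delta=\{(x\cdot y,\ x\cdot C,\ y\cdot C): x,y\in\mathbb S^2\}\subset\mathbb R^3$. For any two distinct points $v,w$ of $V=\{(1,1,1),(1,-1,-1),(-1,1,-1),(-1,-1,1)\}$, the closed line segment from $v$ to $w$ is contained in the boundary $\partial\Delta$. In particular $\partial\Delta$ contains the $1$-skeleton of the regular tetrahedron with vertex set $V$.
   Context: $\mathbb S^2$ is the unit sphere in $\mathbb R^3$ and $\cdot$ is the Euclidean inner product. *)

From Stdlib Require Import Reals Lra.
Open Scope R_scope.

Definition vec3 : Type := (R * R * R)%type.

Definition mk3 (a b c : R) : vec3 := (a, b, c).
Definition vx (v : vec3) : R := fst (fst v).
Definition vy (v : vec3) : R := snd (fst v).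
Definition vz (v : vec3) : R := snd v.

Definition dot (u v : vec3) : R := vx u * vx v + vy u * vy v + vz u * vz v.

Definition norm3 (v : vec3) : R := sqrt (dot v v).
Definition dist3 (u v : vec3) : R :=
  norm3 (mk3 (vx u - vx v) (vy u - vy v) (vz u - vz v)).

Definition on_sphere (x : vec3) : Prop := dot x x = 1.

Definition DeltaSet (C : vec3) (p : vec3) : Prop :=
  exists x y : vec3, on_sphere x /\ on_sphere y /\
    p = mk3 (dot x y) (dot x C) (dot y C).

Definition in_boundary (S : vec3 -> Prop) (p : vec3) : Prop :=
  forall eps : R, 0 < eps ->
    (exists q, S q /\ dist3 p q < eps) /\
    (exists q, ~ S q /\ dist3 p q < eps).

Definition tetV (v : vec3) : Prop :=
  v = mk3 1 1 1 \/ v = mk3 1 (-1) (-1) \/ v = mk3 (-1) 1 (-1) \/ v = mk3 (-1) (-1) 1.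

Definition seg_pt (v w : vec3) (t : R) : vec3 :=
  mk3 ((1 - t) * vx v + t * vx w) ((1 - t) * vy v + t * vy w) ((1 - t) * vz v + t * vz w).

(* Every coordinate of a point of Delta is an inner product of unit vectors, so Delta lies
   in the cube [-1,1]^3, and a point of Delta on a face of the cube is a boundary point.
   Each edge of the tetrahedron lies in a face of the cube, e.g. the edge between (1,1,1)
   and (1,-1,-1) consists of the points (1,s,s), and it lies in Delta: taking x = y with
   x.C = s gives (1,s,s); the other edges are handled with x or y equal to C, -C or -x. *)
From Stdlib Require Import Reals Lra.
Open Scope R_scope.

Definition vopp (v : vec3) : vec3 := mk3 (- vx v) (- vy v) (- vz v).

Ltac unfold_vec3 := unfold on_sphere, vopp, dot, mk3, vx, vy, vz in *; simpl in *.

Lemma dot_comm u v : dot u v = dot v u.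
Proof. unfold dot; ring. Qed.

Lemma dot_oppl u v : dot (vopp u) v = - dot u v.
Proof. unfold_vec3; ring. Qed.

Lemma dot_oppr u v : dot u (vopp v) = - dot u v.
Proof. unfold_vec3; ring. Qed.

Lemma on_sphere_opp x : on_sphere x -> on_sphere (vopp x).
Proof. unfold on_sphere; rewrite dot_oppl, dot_oppr; lra. Qed.

Lemma dot_sphere_bound x y : on_sphere x -> on_sphere y -> -1 <= dot x y <= 1.
Proof.
  destruct x as [[x1 x2] x3], y as [[y1 y2] y3]; unfold_vec3; intros hx hy.
  pose proof (pow2_ge_0 (x1 - y1)); pose proof (pow2_ge_0 (x2 - y2));
  pose proof (pow2_ge_0 (x3 - y3)); pose proof (pow2_ge_0 (x1 + y1));
  pose proof (pow2_ge_0 (x2 + y2)); pose proof (pow2_ge_0 (x3 + y3)).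
  split; nra.
Qed.

Lemma exists_sphere_orthogonal c : exists u, on_sphere u /\ dot u c = 0.
Proof.
  destruct c as [[c1 c2] c3].
  destruct (Req_dec (c2 * c2 + c3 * c3) 0) as [E | E].
  - assert (c2 = 0) by nra; subst c2.
    exists (mk3 0 1 0); unfold_vec3; split; lra.
  - set (r := sqrt (c2 * c2 + c3 * c3)).
    assert (Hr : r * r = c2 * c2 + c3 * c3) by (apply sqrt_sqrt; nra).
    assert (Hr0 : r <> 0) by (intros Z; rewrite Z in Hr; lra).
    exists (mk3 0 (c3 / r) (- c2 / r)); unfold_vec3; split.
    + replace (0 * 0 + c3 / r * (c3 / r) + - c2 / r * (- c2 / r))
        with ((c2 * c2 + c3 * c3) / (r * r)) by (field; auto).
      rewrite Hr; field; auto.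
    + field; auto.
Qed.

(* The witness is s C + sqrt(1 - s^2) u with u a unit vector orthogonal to C. *)
Lemma exists_sphere_height C s :
  on_sphere C -> -1 <= s <= 1 -> exists y, on_sphere y /\ dot y C = s.
Proof.
  intros hC hs; destruct (exists_sphere_orthogonal C) as [u [hu huC]].
  set (r := sqrt (1 - s * s)).
  assert (Hr : r * r = 1 - s * s) by (apply sqrt_sqrt; nra).
  exists (mk3 (s * vx C + r * vx u) (s * vy C + r * vy u) (s * vz C + r * vz u)).
  destruct C as [[c1 c2] c3], u as [[u1 u2] u3]; unfold_vec3; split.
  - transitivity (s * s * (c1 * c1 + c2 * c2 + c3 * c3)
                  + 2 * s * r * (u1 * c1 + u2 * c2 + u3 * c3)
                  + r * r * (u1 * u1 + u2 * u2 + u3 * u3)); [ring |].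
    rewrite hC, hu, huC, Hr; ring.
  - transitivity (s * (c1 * c1 + c2 * c2 + c3 * c3) + r * (u1 * c1 + u2 * c2 + u3 * c3));
      [ring |].
    rewrite hC, huC; ring.
Qed.

(* A point of S where the unit linear functional e attains its supremum 1 over S
   is a boundary point: p + d e is outside S at distance d. *)
Lemma in_boundary_supporting_point (S : vec3 -> Prop) e p :
  on_sphere e -> (forall q, S q -> dot e q <= 1) -> S p -> dot e p = 1 ->
  in_boundary S p.
Proof.
  intros he hS hp hep eps heps; split.
  - exists p; split; [exact hp |].
    unfold dist3, norm3; replace (dot _ _) with 0 by (unfold_vec3; ring).
    rewrite sqrt_0; lra.
  - set (d := eps / 2).
    set (q := mk3 (vx p + d * vx e) (vy p + d * vy e) (vz p + d * vz e)).
    exists q; split.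
    + intros hq; apply hS in hq.
      assert (dot e q = dot e p + d * dot e e) by (unfold q; unfold_vec3; ring).
      unfold on_sphere in he; unfold d in *; nra.
    + unfold dist3, norm3.
      replace (dot _ _) with (d * d * dot e e) by (unfold q; unfold_vec3; ring).
      unfold on_sphere in he; rewrite he, Rmult_1_r, sqrt_square; unfold d; lra.
Qed.

Definition on_tet_edge (p : vec3) : Prop :=
  exists s, -1 <= s <= 1 /\
    (p = mk3 1 s s \/ p = mk3 s 1 s \/ p = mk3 s s 1 \/
     p = mk3 (-1) (- s) s \/ p = mk3 (- s) (-1) s \/ p = mk3 (- s) s (-1)).

Section Delta.

Variable C : vec3.
Hypothesis hC : on_sphere C.

Lemma DeltaSet_in_cube q :
  DeltaSet C q -> -1 <= vx q <= 1 /\ -1 <= vy q <= 1 /\ -1 <= vz q <= 1.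
Proof.
  intros [x [y [hx [hy ->]]]]; unfold mk3, vx, vy, vz; simpl.
  split; [| split]; apply dot_sphere_bound; auto.
Qed.

Lemma DeltaSet_on_cube_face_in_boundary p :
  DeltaSet C p ->
  vx p = 1 \/ vx p = -1 \/ vy p = 1 \/ vy p = -1 \/ vz p = 1 \/ vz p = -1 ->
  in_boundary (DeltaSet C) p.
Proof.
  intros hp hface.
  assert (Hcube := DeltaSet_in_cube).
  destruct hface as [h | [h | [h | [h | [h | h]]]]];
    [ apply (in_boundary_supporting_point _ (mk3 1 0 0))
    | apply (in_boundary_supporting_point _ (mk3 (-1) 0 0))
    | apply (in_boundary_supporting_point _ (mk3 0 1 0))
    | apply (in_boundary_supporting_point _ (mk3 0 (-1) 0))
    | apply (in_boundary_supporting_point _ (mk3 0 0 1))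
    | apply (in_boundary_supporting_point _ (mk3 0 0 (-1))) ];
    try exact hp; try (unfold_vec3; lra);
    intros q hq; destruct (Hcube q hq) as [? [? ?]]; unfold_vec3; lra.
Qed.

Lemma DeltaSet_sphere x y :
  on_sphere x -> on_sphere y -> DeltaSet C (mk3 (dot x y) (dot x C) (dot y C)).
Proof. intros hx hy; exists x, y; auto. Qed.

Lemma DeltaSet_edge_x s : -1 <= s <= 1 -> DeltaSet C (mk3 1 s s).
Proof.
  intros hs; destruct (exists_sphere_height C s hC hs) as [y [hy hyC]].
  replace (mk3 1 s s) with (mk3 (dot y y) (dot y C) (dot y C))
    by (unfold on_sphere in hy; rewrite hy, hyC; reflexivity).
  apply DeltaSet_sphere; auto.
Qed.

Lemma DeltaSet_edge_y s : -1 <= s <= 1 -> DeltaSet C (mk3 s 1 s).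
Proof.
  intros hs; destruct (exists_sphere_height C s hC hs) as [y [hy hyC]].
  replace (mk3 s 1 s) with (mk3 (dot C y) (dot C C) (dot y C))
    by (unfold on_sphere in hC; rewrite dot_comm, hC, hyC; reflexivity).
  apply DeltaSet_sphere; auto.
Qed.

Lemma DeltaSet_edge_z s : -1 <= s <= 1 -> DeltaSet C (mk3 s s 1).
Proof.
  intros hs; destruct (exists_sphere_height C s hC hs) as [x [hx hxC]].
  replace (mk3 s s 1) with (mk3 (dot x C) (dot x C) (dot C C))
    by (unfold on_sphere in hC; rewrite hC, hxC; reflexivity).
  apply DeltaSet_sphere; auto.
Qed.

Lemma DeltaSet_opp_xy a b c : DeltaSet C (mk3 a b c) -> DeltaSet C (mk3 (- a) (- b) c).
Proof.
  intros [x [y [hx [hy E]]]]; injection E as -> -> ->.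
  rewrite <- !dot_oppl; apply DeltaSet_sphere; auto using on_sphere_opp.
Qed.

Lemma DeltaSet_opp_xz a b c : DeltaSet C (mk3 a b c) -> DeltaSet C (mk3 (- a) b (- c)).
Proof.
  intros [x [y [hx [hy E]]]]; injection E as -> -> ->.
  rewrite <- dot_oppr, <- dot_oppl; apply DeltaSet_sphere; auto using on_sphere_opp.
Qed.

Lemma tet_edge_in_boundary p : on_tet_edge p -> in_boundary (DeltaSet C) p.
Proof.
  intros [s [hs hp]]; apply DeltaSet_on_cube_face_in_boundary.
  - destruct hp as [-> | [-> | [-> | [-> | [-> | ->]]]]].
    + apply DeltaSet_edge_x; auto.
    + apply DeltaSet_edge_y; auto.
    + apply DeltaSet_edge_z; auto.
    + apply (DeltaSet_opp_xy 1 s s), DeltaSet_edge_x; auto.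
    + apply (DeltaSet_opp_xy s 1 s), DeltaSet_edge_y; auto.
    + apply (DeltaSet_opp_xz s s 1), DeltaSet_edge_z; auto.
  - destruct hp as [-> | [-> | [-> | [-> | [-> | ->]]]]]; unfold_vec3; tauto.
Qed.

End Delta.

Ltac solve_vec3_eq := f_equal; [f_equal |]; ring.

Ltac solve_disjunct := first [ left; solve_vec3_eq | right; solve_disjunct | solve_vec3_eq ].

Ltac solve_edge_param s := exists s; split; [lra | solve_disjunct].

Lemma seg_pt_on_tet_edge v w t :
  tetV v -> tetV w -> v <> w -> 0 <= t <= 1 -> on_tet_edge (seg_pt v w t).
Proof.
  intros hv hw hvw ht; unfold tetV in hv, hw.
  destruct hv as [-> | [-> | [-> | ->]]]; destruct hw as [-> | [-> | [-> | ->]]];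
    try (exfalso; apply hvw; reflexivity);
    unfold on_tet_edge, seg_pt; unfold_vec3;
    first [ solve_edge_param (1 - 2 * t) | solve_edge_param (2 * t - 1) ].
Qed.

Theorem mainTheorem7 (Cvec : vec3) (hC : dot Cvec Cvec = 1) (v w : vec3)
  (hv : tetV v) (hw : tetV w) (hvw : v <> w) (t : R) (ht0 : 0 <= t) (ht1 : t <= 1) :
  in_boundary (DeltaSet Cvec) (seg_pt v w t).
Proof.
  apply tet_edge_in_boundary; [exact hC |].
  apply seg_pt_on_tet_edge; auto.
Qed.
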